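(* Define sets of positive integers $R_1,R_2,\dots$ by $R_1=\{2\}$ and, for $k\geq 1$, $R_{k+1}=\{(x+5)^2 : x\in R_k\}\cup\{x\in\mathbb{Z}_{>0} : x^2\in R_k\}$. Then every integer $x$ with $x\geq 2$ and $x\not\equiv 0\pmod 5$ lies in $R_i$ for at least one $i\geq 1$. *)

From mathcomp Require Import all_boot.
Set Implicit Arguments. Unset Strict Implicit. Unset Printing Implicit Defensive.

(* Rset k y  <->  y ∈ R_k, for k >= 1.  (Rset 0 is the empty set; unused.)
   R_1 = {2};  R_{k+1} = {(x+5)^2 : x ∈ R_k} ∪ {x ∈ Z_{>0} : x^2 ∈ R_k}. *)
Fixpoint Rset (k : nat) (y : nat) : Prop :=
  match k with
  | 0 => False
  | 1 => y = 2
  | k'.+1 => (exists x, Rset k' x /\ y = (x + 5) ^ 2)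
             \/ (0 < y /\ Rset k' (y ^ 2))
  end.

From mathcomp Require Import all_boot.
From mathcomp Require Import zify.

Set Implicit Arguments.
Unset Strict Implicit.
Unset Printing Implicit Defensive.

(* The union of the R_k contains 2 and is closed under x |-> (x + 5)^2 and
   under square roots, hence under x |-> sqrt((x + 5)^2) = x + 5.  So every
   number above a member and congruent to it mod 5 is a member, and so is
   every y whose square is such a number.  Starting from 2, the chain
   2 -> 49 = 7^2 -> 2916 = 54^2 -> 56 -> 9, 11 -> 3, 4, 6 produces members in
   every nonzero residue class mod 5, each below all x >= 2 of its class. *)

Definition reachable (y : nat) : Prop := exists i, 1 <= i /\ Rset i y.

Lemma reachable2 : reachable 2.
Proof. by exists 1. Qed.

Lemma reachable_sqrD5 x : reachable x -> reachable ((x + 5) ^ 2).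
Proof. by case=> [[|i] [_ Rx]] //; exists i.+2; split=> //=; left; exists x. Qed.

Lemma reachable_sqrt y : 0 < y -> reachable (y ^ 2) -> reachable y.
Proof. by move=> y_gt0 [[|i] [_ Ry2]] //; exists i.+2; split=> //=; right. Qed.

Lemma reachableD5 x : reachable x -> reachable (x + 5).
Proof.
by move=> Rx; apply: reachable_sqrt; [rewrite addn_gt0 orbT | apply: reachable_sqrD5].
Qed.

Lemma reachableDM5 x k : reachable x -> reachable (x + 5 * k).
Proof.
move=> Rx; elim: k => [|k IHk]; first by rewrite muln0 addn0.
by rewrite mulnS addnCA addnC; apply: reachableD5.
Qed.

Lemma reachable_modn a b : reachable a -> a <= b -> a = b %[mod 5] -> reachable b.
Proof.
move=> Ra le_ab eq_ab.
have -> : b = a + 5 * ((b - a) %/ 5) by lia.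
exact: reachableDM5.
Qed.

Lemma reachable_sqrt_modn a y :
  reachable a -> 0 < y -> a <= y ^ 2 -> a = y ^ 2 %[mod 5] -> reachable y.
Proof.
move=> Ra y_gt0 le_ay2 eq_ay2.
exact: reachable_sqrt y_gt0 (reachable_modn Ra le_ay2 eq_ay2).
Qed.

Lemma reachable_3_4_6 : [/\ reachable 3, reachable 4 & reachable 6].
Proof.
have R49 : reachable 49 := reachable_sqrD5 reachable2.
have R56 : reachable 56 by apply/(reachable_sqrt_modn (reachable_sqrD5 R49)).
have R9 : reachable 9 by apply/(reachable_sqrt_modn R56).
have R11 : reachable 11 by apply/(reachable_sqrt_modn R56).
by split; [apply/(reachable_sqrt_modn R9) | apply/(reachable_sqrt_modn R11) ..].
Qed.

Theorem corollary6 (x : nat) :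
  2 <= x -> x %% 5 != 0 -> exists i, 1 <= i /\ Rset i x.
Proof.
move=> x_ge2 x_mod5; have [R3 R4 R6] := reachable_3_4_6.
have : x = 6 %[mod 5] \/ x = 2 %[mod 5] \/ x = 3 %[mod 5] \/ x = 4 %[mod 5] by lia.
case=> [|[|[]]] x_mod.
- by apply: reachable_modn R6 _ _; lia.
- by apply: reachable_modn reachable2 _ _; lia.
- by apply: reachable_modn R3 _ _; lia.
- by apply: reachable_modn R4 _ _; lia.
Qed.
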